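(* Let $\mathcal L$ be a differential Seely category with comonad $(!,\mathbf d,\mathbf p)$ and let $\mathcal L_!$ be its co-Kleisli category. Then the canonical linear-non-linear adjunction between $\mathcal L_!$ and $\mathcal L$ (with $\mathcal F:\mathcal L_!\to\mathcal L$, $A\mapsto !A$, $f\mapsto\mathbf p_A;!f$ for $f:!A\to B$, and $\mathcal U:\mathcal L\to\mathcal L_!$, $A\mapsto A$, $u\mapsto\mathbf d_A;u$) is a generalised differential Seely category, i.e. it admits a functor $\mathcal T:\mathcal L_!\to LS(\mathcal L_!)$ satisfying axioms (t.1), (t.2), (t.3).
   Context: Composition is diagrammatic ($f;g$ = $f$ then $g$); monoidal categories are strict. Differential Seely category: an additive symmetric monoidal category $(\mathcal L,\otimes,1)$ (enriched over commutative monoids with $\otimes$ bilinear and preserving $0$) with finite products, which are biproducts $\oplus$ (projections $\pi_i$, injections $\iota_i$), and a comonad $(!,\mathbf d,\mathbf p)$ with Seely isomorphisms $!(A\oplus B)\cong!A\otimes!B$, $!0\cong1$ (so the co-Kleisli category $\mathcal L_!$ is cartesian, with products $\oplus$, and the co-Kleisli adjunction is a symmetric monoidal adjunction; each $!A$ is a commutative comonoid with contraction $\mathbf c_A$ and weakening $\mathbf w_A$), together with a natural $\partial_A:!A\otimes A\to!A$ satisfying: $\partial_A;\mathbf w_A=0$; $\partial_A;\mathbf c_A=(\mathbf c_A\otimes\mathrm{id}_A);[(\mathrm{id}_{!A}\otimes\partial_A)+(\mathrm{id}_{!A}\otimes\sigma_{!A,A};\partial_A\otimes\mathrm{id}_{!A})]$;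 $\partial_A;\mathbf d_A=\mathbf w_A\otimes\mathrm{id}_A$; $\partial_A;\mathbf p_A=(\mathbf c_A\otimes\mathrm{id}_A);(\mathbf p_A\otimes\partial_A);\partial_{!A}$; $(\mathrm{id}_{!A}\otimes\sigma_{A,A});(\partial_A\otimes\mathrm{id}_A);\partial_A=(\partial_A\otimes\mathrm{id}_A);\partial_A$. General notions, for an LNL adjunction $\mathcal F\dashv\mathcal U$, $\mathcal F:\mathscr C\to\mathcal L$, between a cartesian $(\mathscr C,\times,I)$ and symmetric monoidal $(\mathcal L,\otimes,1)$, with $\mathcal U$ lax monoidal via $n_{A,B}:\mathcal U(A)\times\mathcal U(B)\to\mathcal U(A\otimes B)$, $\mathcal F$ strong monoidal via $m_{X,Y}:\mathcal F(X)\otimes\mathcal F(Y)\to\mathcal F(X\times Y)$, $m_1:1\to\mathcal F(I)$, unit $\eta$: $\mathbf c_X:=\mathcal F(\Delta_X);m_{X,X}^{-1}$, $\mathbf w_X:=\mathcal F(t_X);m_1^{-1}$ ($t_X$ terminal). $LS(\mathscr C)$ has objects $(X,A)$ ($X\in\mathscr C$, $A\in\mathcal L$), morphisms $(f,u):(X,A)\to(Y,B)$ with $f:X\to Y$, $u:\mathcal F(X)\otimes A\to B$, composition $(f,u);(g,v)=(f;g,(\mathbf c_X\otimes\mathrm{id}_A);(\mathcal F(f)\otimes u);v)$, identity $(\mathrm{id}_X,\mathbf w_X\otimes\mathrm{id}_A)$, projection $\mathbf{ls}(f,u)=f$; when $\mathcal L$ has biproducts, $LS(\mathscr C)$ has products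 $(X,A)\times(Y,B)=(X\times Y,A\oplus B)$ with projections $(\pi_i,\mathbf w_{X\times Y}\otimes\pi_i)$. Axioms for $\mathcal T:\mathscr C\to LS(\mathscr C)$: (t.1) $\mathbf{ls}\circ\mathcal T=\mathrm{id}$ (so $\mathcal T(X)=(X,\lambda(X))$) and $\varphi_{X,Y}:=\langle\mathcal T(\pi_1),\mathcal T(\pi_2)\rangle:\mathcal T(X\times Y)\to(X\times Y,\lambda(X)\oplus\lambda(Y))$ is an isomorphism; (t.2) $\mathcal T(\mathcal U(A))=(\mathcal U(A),A)$; (t.3) with $i^{X,Y}_2:=(\mathrm{id}_{X\times Y},\mathbf w_{X\times Y}\otimes\iota_2);\varphi_{X,Y}^{-1}$, $⦃(f,u)⦄:=\langle\pi_1;f,(\eta_X\times\mathrm{id}_{\mathcal U(A)});n_{\mathcal F(X),A};\mathcal U(u)\rangle:X\times\mathcal U(A)\to Y\times\mathcal U(B)$, $W(f,u):=(⦃(f,u)⦄,(\mathcal F(\pi_1)\otimes\mathrm{id}_A);u):(X\times\mathcal U(A),A)\to(Y\times\mathcal U(B),B)$: $W(f,u);i^{Y,\mathcal U(B)}_2=i^{X,\mathcal U(A)}_2;\mathcal T(⦃(f,u)⦄)$ for all $(f,u):(X,A)\to(Y,B)$. A GDSC is such an LNL with $\mathcal L$ additive with finite products and such a $\mathcal T$. *)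

From Stdlib Require Import Setoid.
Set Implicit Arguments.
Unset Strict Implicit.

(* The paper's monoidal categories are strict by convention; here the *)
(* associator / unitors are explicit coherent isomorphisms (see       *)
Record AddSMCat := {
  Ob :> Type;
  Hom : Ob -> Ob -> Type;
  comp : forall {A B C : Ob}, Hom A B -> Hom B C -> Hom A C;
  idm : forall A : Ob, Hom A A;
  comp_assoc : forall A B C D (f : Hom A B) (g : Hom B C) (h : Hom C D),
      comp (comp f g) h = comp f (comp g h);
  comp_id_l : forall A B (f : Hom A B), comp (idm A) f = f;
  comp_id_r : forall A B (f : Hom A B), comp f (idm B) = f;
  zero : forall A B : Ob, Hom A B;
  add : forall {A B : Ob}, Hom A B -> Hom A B -> Hom A B;
  add_assoc : forall A B (f g h : Hom A B), add (add f g) h = add f (add g h);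
  add_comm : forall A B (f g : Hom A B), add f g = add g f;
  add_0_l : forall A B (f : Hom A B), add (zero A B) f = f;
  comp_add_l : forall A B C (f g : Hom A B) (h : Hom B C),
      comp (add f g) h = add (comp f h) (comp g h);
  comp_add_r : forall A B C (f : Hom A B) (g h : Hom B C),
      comp f (add g h) = add (comp f g) (comp f h);
  comp_0_l : forall A B C (h : Hom B C), comp (zero A B) h = zero A C;
  comp_0_r : forall A B C (f : Hom A B), comp f (zero B C) = zero A C;
  tens : Ob -> Ob -> Ob;
  tmor : forall {A A' B B' : Ob}, Hom A A' -> Hom B B' -> Hom (tens A B) (tens A' B');
  tmor_id : forall A B, tmor (idm A) (idm B) = idm (tens A B);
  tmor_comp : forall A A' A'' B B' B'' (f : Hom A A') (f' : Hom A' A'')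
      (g : Hom B B') (g' : Hom B' B''),
      tmor (comp f f') (comp g g') = comp (tmor f g) (tmor f' g');
  tmor_add_l : forall A A' B B' (f f' : Hom A A') (g : Hom B B'),
      tmor (add f f') g = add (tmor f g) (tmor f' g);
  tmor_add_r : forall A A' B B' (f : Hom A A') (g g' : Hom B B'),
      tmor f (add g g') = add (tmor f g) (tmor f g');
  tmor_0_l : forall A A' B B' (g : Hom B B'), tmor (zero A A') g = zero _ _;
  tmor_0_r : forall A A' B B' (f : Hom A A'), tmor f (zero B B') = zero _ _;
  unit : Ob;
  assoc : forall A B C, Hom (tens (tens A B) C) (tens A (tens B C));
  assoc_inv : forall A B C, Hom (tens A (tens B C)) (tens (tens A B) C);
  assoc_iso1 : forall A B C, comp (assoc A B C) (assoc_inv A B C) = idm _;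
  assoc_iso2 : forall A B C, comp (assoc_inv A B C) (assoc A B C) = idm _;
  assoc_nat : forall A A' B B' C C' (f : Hom A A') (g : Hom B B') (h : Hom C C'),
      comp (tmor (tmor f g) h) (assoc A' B' C') = comp (assoc A B C) (tmor f (tmor g h));
  lunit : forall A, Hom (tens unit A) A;
  lunit_inv : forall A, Hom A (tens unit A);
  lunit_iso1 : forall A, comp (lunit A) (lunit_inv A) = idm _;
  lunit_iso2 : forall A, comp (lunit_inv A) (lunit A) = idm _;
  lunit_nat : forall A A' (f : Hom A A'),
      comp (tmor (idm unit) f) (lunit A') = comp (lunit A) f;
  runit : forall A, Hom (tens A unit) A;
  runit_inv : forall A, Hom A (tens A unit);
  runit_iso1 : forall A, comp (runit A) (runit_inv A) = idm _;
  runit_iso2 : forall A, comp (runit_inv A) (runit A) = idm _;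
  runit_nat : forall A A' (f : Hom A A'),
      comp (tmor f (idm unit)) (runit A') = comp (runit A) f;
  sym : forall A B, Hom (tens A B) (tens B A);
  sym_nat : forall A A' B B' (f : Hom A A') (g : Hom B B'),
      comp (tmor f g) (sym A' B') = comp (sym A B) (tmor g f);
  sym_inv : forall A B, comp (sym A B) (sym B A) = idm _;
  pentagon : forall A B C D,
      comp (comp (tmor (assoc A B C) (idm D)) (assoc A (tens B C) D))
           (tmor (idm A) (assoc B C D))
      = comp (assoc (tens A B) C D) (assoc A B (tens C D));
  triangle : forall A B,
      comp (assoc A unit B) (tmor (idm A) (lunit B)) = tmor (runit A) (idm B);
  hexagon : forall A B C,
      comp (comp (assoc A B C) (sym A (tens B C))) (assoc B C A)
      = comp (comp (tmor (sym A B) (idm C)) (assoc B A C)) (tmor (idm B) (sym A C));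
  bp : Ob -> Ob -> Ob;
  pi1 : forall A B, Hom (bp A B) A;
  pi2 : forall A B, Hom (bp A B) B;
  inj1 : forall A B, Hom A (bp A B);
  inj2 : forall A B, Hom B (bp A B);
  inj1_pi1 : forall A B, comp (inj1 A B) (pi1 A B) = idm A;
  inj2_pi2 : forall A B, comp (inj2 A B) (pi2 A B) = idm B;
  inj1_pi2 : forall A B, comp (inj1 A B) (pi2 A B) = zero A B;
  inj2_pi1 : forall A B, comp (inj2 A B) (pi1 A B) = zero B A;
  bp_id : forall A B,
      add (comp (pi1 A B) (inj1 A B)) (comp (pi2 A B) (inj2 A B)) = idm (bp A B);
  zob : Ob;
  zob_id : idm zob = zero zob zob
}.

Arguments Hom : clear implicits.
Arguments comp {a A B C}.
Arguments idm {a}.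
Arguments zero {a}.
Arguments add {a A B}.
Arguments tens {a}.
Arguments tmor {a A A' B B'}.
Arguments unit {a}.
Arguments assoc {a}.
Arguments assoc_inv {a}.
Arguments lunit {a}.
Arguments lunit_inv {a}.
Arguments runit {a}.
Arguments runit_inv {a}.
Arguments sym {a}.
Arguments bp {a}.
Arguments pi1 {a}.
Arguments pi2 {a}.
Arguments inj1 {a}.
Arguments inj2 {a}.
Arguments zob {a}.

Infix ";;" := comp (at level 40, left associativity).

Definition bpair {L : AddSMCat} {C A B : L} (f : Hom L C A) (g : Hom L C B)
  : Hom L C (bp A B) := add (f ;; inj1 A B) (g ;; inj2 A B).

Record Storage (L : AddSMCat) := {
  bang : L -> L;
  bmor : forall {A B : L}, Hom L A B -> Hom L (bang A) (bang B);
  bmor_id : forall A, bmor (idm A) = idm (bang A);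
  bmor_comp : forall A B C (f : Hom L A B) (g : Hom L B C),
      bmor (f ;; g) = bmor f ;; bmor g;
  der : forall A, Hom L (bang A) A;
  dig : forall A, Hom L (bang A) (bang (bang A));
  der_nat : forall A B (f : Hom L A B), bmor f ;; der B = der A ;; f;
  dig_nat : forall A B (f : Hom L A B), bmor f ;; dig B = dig A ;; bmor (bmor f);
  comonad_1 : forall A, dig A ;; der (bang A) = idm (bang A);
  comonad_2 : forall A, dig A ;; bmor (der A) = idm (bang A);
  comonad_3 : forall A, dig A ;; dig (bang A) = dig A ;; bmor (dig A);
  seely : forall A B, Hom L (tens (bang A) (bang B)) (bang (bp A B));
  seely_inv : forall A B, Hom L (bang (bp A B)) (tens (bang A) (bang B));
  seely_iso1 : forall A B, seely A B ;; seely_inv A B = idm _;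
  seely_iso2 : forall A B, seely_inv A B ;; seely A B = idm _;
  seely0 : Hom L unit (bang zob);
  seely0_inv : Hom L (bang zob) unit;
  seely0_iso1 : seely0 ;; seely0_inv = idm _;
  seely0_iso2 : seely0_inv ;; seely0 = idm _
}.

Existing Class Storage.
Arguments bang {L s}.
Arguments bmor {L s A B}.
Arguments der {L s}.
Arguments dig {L s}.
Arguments seely {L s}.
Arguments seely_inv {L s}.
Arguments seely0 {L s}.
Arguments seely0_inv {L s}.

Section CoKleisli.
Context {L : AddSMCat} `{S : Storage L}.

Definition KHom (X Y : L) : Type := Hom L (@bang L S X) Y.
Definition kcomp {X Y Z : L} (f : KHom X Y) (g : KHom Y Z) : KHom X Z :=
  @dig L S X ;; @bmor L S _ _ f ;; g.
Definition kid (X : L) : KHom X X := @der L S X.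

Definition kpi1 (X Y : L) : KHom (bp X Y) X := @der L S (bp X Y) ;; pi1 X Y.
Definition kpi2 (X Y : L) : KHom (bp X Y) Y := @der L S (bp X Y) ;; pi2 X Y.
Definition kpair {Z X Y : L} (f : KHom Z X) (g : KHom Z Y) : KHom Z (bp X Y) :=
  bpair f g.
Definition kterm (X : L) : KHom X zob := zero _ zob.
Definition kdiag (X : L) : KHom X (bp X X) := kpair (kid X) (kid X).
Definition kprod {X X' Y Y' : L} (f : KHom X X') (g : KHom Y Y')
  : KHom (bp X Y) (bp X' Y') :=
  kpair (kcomp (kpi1 X Y) f) (kcomp (kpi2 X Y) g).
Definition kassoc (X Y Z : L) : KHom (bp (bp X Y) Z) (bp X (bp Y Z)) :=
  kpair (kcomp (kpi1 _ _) (kpi1 X Y))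
        (kpair (kcomp (kpi1 _ _) (kpi2 X Y)) (kpi2 (bp X Y) Z)).
Definition kswap (X Y : L) : KHom (bp X Y) (bp Y X) :=
  kpair (kpi2 X Y) (kpi1 X Y).

Definition Fob (X : L) : L := @bang L S X.
Definition Fmor {X Y : L} (f : KHom X Y) : Hom L (Fob X) (Fob Y) :=
  @dig L S X ;; @bmor L S _ _ f.
Definition Uob (A : L) : L := A.
Definition Umor {A B : L} (u : Hom L A B) : KHom (Uob A) (Uob B) := @der L S A ;; u.
Definition mF (X Y : L) : Hom L (tens (Fob X) (Fob Y)) (Fob (bp X Y)) := @seely L S X Y.
Definition mF_inv (X Y : L) : Hom L (Fob (bp X Y)) (tens (Fob X) (Fob Y)) :=
  @seely_inv L S X Y.
Definition mF1 : Hom L unit (Fob zob) := (@seely0 L S).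
Definition mF1_inv : Hom L (Fob zob) unit := (@seely0_inv L S).
Definition eta (X : L) : KHom X (Uob (Fob X)) := idm (@bang L S X).
(* lax monoidal structure of U induced by doctrinal adjunction:
   n_{A,B} = eta ; U(m^{-1} ; (d (x) d)) *)
Definition nU (A B : L) : KHom (bp (Uob A) (Uob B)) (Uob (tens A B)) :=
  kcomp (eta (bp A B)) (Umor (mF_inv A B ;; tmor (@der L S A) (@der L S B))).
Definition contr (X : L) : Hom L (Fob X) (tens (Fob X) (Fob X)) :=
  Fmor (kdiag X) ;; mF_inv X X.
Definition weak (X : L) : Hom L (Fob X) unit :=
  Fmor (kterm X) ;; mF1_inv.

End CoKleisli.

(* The Seely isomorphisms make F strong symmetric monoidal
   (L_!, (+), 0) -> (L, (x), 1), i.e. the co-Kleisli adjunction is a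
   symmetric monoidal adjunction. *)
Record SeelyLaws {L : AddSMCat} (S : Storage L) := {
  seely_nat : forall X X' Y Y' (f : @KHom L S X X') (g : @KHom L S Y Y'),
      tmor (Fmor f) (Fmor g) ;; mF X' Y' = mF X Y ;; Fmor (kprod f g);
  seely_assoc : forall X Y Z : L,
      tmor (@mF L S X Y) (idm _) ;; mF (bp X Y) Z ;; Fmor (kassoc X Y Z)
      = assoc _ _ _ ;; tmor (idm _) (mF Y Z) ;; mF X (bp Y Z);
  seely_lunit : forall X : L,
      tmor (@mF1 L S) (idm (Fob X)) ;; mF zob X ;; Fmor (kpi2 zob X) = lunit (Fob X);
  seely_runit : forall X : L,
      tmor (idm (Fob X)) (@mF1 L S) ;; mF X zob ;; Fmor (kpi1 X zob) = runit (Fob X);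
  seely_sym : forall X Y : L,
      @mF L S X Y ;; Fmor (kswap X Y) = sym _ _ ;; mF Y X
}.

Record Deriving {L : AddSMCat} (S : Storage L) := {
  del : forall A : L, Hom L (tens (@bang L S A) A) (bang A);
  del_nat : forall A B (f : Hom L A B),
      tmor (bmor f) f ;; del B = del A ;; bmor f;
  del_weak : forall A, del A ;; weak A = zero _ _;
  del_contr : forall A,
      del A ;; contr A
      = tmor (contr A) (idm A) ;;
        add (assoc _ _ _ ;; tmor (idm _) (del A))
            (assoc _ _ _ ;; tmor (idm _) (sym _ _) ;; assoc_inv _ _ _ ;;
             tmor (del A) (idm _));
  del_der : forall A, del A ;; der A = tmor (weak A) (idm A) ;; lunit A;
  del_dig : forall A,
      del A ;; dig A
      = tmor (contr A) (idm A) ;; assoc _ _ _ ;; tmor (dig A) (del A) ;; del (bang A);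
  del_del : forall A,
      assoc _ _ _ ;; tmor (idm _) (sym A A) ;; assoc_inv _ _ _ ;;
      tmor (del A) (idm A) ;; del A
      = tmor (del A) (idm A) ;; del A
}.

Record DiffSeely := {
  dsL : AddSMCat;
  dsS : Storage dsL;
  dsSeely : SeelyLaws dsS;
  dsDel : Deriving dsS
}.

(* Objects: pairs (X, A); morphisms (f, u) with f : X -> Y in L_! and *)
(* u : F(X) (x) A -> B in L.                                          *)
Section LS.
Context {L : AddSMCat} `{S : Storage L}.

Definition LSHom (X A Y B : L) : Type :=
  (@KHom L S X Y * Hom L (tens (Fob X) A) B)%type.

Definition LScomp {X A Y B Z C : L} (fu : LSHom X A Y B) (gv : LSHom Y B Z C)
  : LSHom X A Z C :=
  (kcomp (fst fu) (fst gv),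
   tmor (contr X) (idm A) ;; assoc _ _ _ ;; tmor (Fmor (fst fu)) (snd fu) ;; snd gv).

Definition LSid (X A : L) : LSHom X A X A :=
  (kid X, tmor (weak X) (idm A) ;; lunit A).

Definition LSpi1 (X A Y B : L) : LSHom (bp X Y) (bp A B) X A :=
  (kpi1 X Y, tmor (weak (bp X Y)) (pi1 A B) ;; lunit A).
Definition LSpi2 (X A Y B : L) : LSHom (bp X Y) (bp A B) Y B :=
  (kpi2 X Y, tmor (weak (bp X Y)) (pi2 A B) ;; lunit B).
Definition LSpair {Z C X A Y B : L} (fu : LSHom Z C X A) (gv : LSHom Z C Y B)
  : LSHom Z C (bp X Y) (bp A B) :=
  (kpair (fst fu) (fst gv), bpair (snd fu) (snd gv)).

Definition castSrc {A A' C : L} (e : A = A') (f : Hom L A C) : Hom L A' C :=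
  match e in _ = A'' return Hom L A'' C with eq_refl => f end.

End LS.

(* A functor T with ls o T = id is given by its object part           *)
(* X |-> (X, lam X) and its morphism part f |-> (f, tau f).            *)
Unset Implicit Arguments.
Section GDSC.
Context {L : AddSMCat} `{S : Storage L}.

Definition Tmor (lam : L -> L)
  (tau : forall X Y : L, @KHom L S X Y -> Hom L (tens (Fob X) (lam X)) (lam Y))
  {X Y : L} (f : KHom X Y) : LSHom X (lam X) Y (lam Y) := (f, tau X Y f).

Definition T_functor (lam : L -> L)
  (tau : forall X Y : L, @KHom L S X Y -> Hom L (tens (Fob X) (lam X)) (lam Y))
  : Prop :=
  (forall X : L, Tmor lam tau (kid X) = LSid X (lam X)) /\
  (forall (X Y Z : L) (f : KHom X Y) (g : KHom Y Z),
      Tmor lam tau (kcomp f g) = LScomp (Tmor lam tau f) (Tmor lam tau g)).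

Definition phiT (lam : L -> L)
  (tau : forall X Y : L, @KHom L S X Y -> Hom L (tens (Fob X) (lam X)) (lam Y))
  (X Y : L) : LSHom (bp X Y) (lam (bp X Y)) (bp X Y) (bp (lam X) (lam Y)) :=
  LSpair (Tmor lam tau (kpi1 X Y)) (Tmor lam tau (kpi2 X Y)).

Definition curlyW {X A Y B : L} (f : @KHom L S X Y) (u : Hom L (tens (Fob X) A) B)
  : KHom (bp X (Uob A)) (bp Y (Uob B)) :=
  kpair (kcomp (kpi1 X (Uob A)) f)
        (kcomp (kcomp (kprod (eta X) (kid (Uob A))) (nU (Fob X) A)) (Umor u)).

Definition Wmor {X A Y B : L} (f : @KHom L S X Y) (u : Hom L (tens (Fob X) A) B)
  : LSHom (bp X (Uob A)) A (bp Y (Uob B)) B :=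
  (curlyW f u, tmor (Fmor (kpi1 X (Uob A))) (idm A) ;; u).

(* i_2^{X, U(A)} := (id, w (x) iota_2) ; phi^{-1}, where the source object
   (X x U(A), lam(U(A))) is identified with (X x U(A), A) via (t.2). *)
Definition i2 (lam : L -> L) (e : forall A : L, lam (Uob A) = A)
  (phinv : forall X Y : L,
      @LSHom L S (bp X Y) (bp (lam X) (lam Y)) (bp X Y) (lam (bp X Y)))
  (X A : L) : LSHom (bp X (Uob A)) A (bp X (Uob A)) (lam (bp X (Uob A))) :=
  LScomp ((kid (bp X (Uob A)),
           tmor (weak (bp X (Uob A))) (castSrc (e A) (inj2 (lam X) (lam (Uob A))))
           ;; lunit _) : LSHom (bp X (Uob A)) A (bp X (Uob A)) (bp (lam X) (lam (Uob A))))
         (phinv X (Uob A)).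

Definition is_GDSC_T : Prop :=
  exists (lam : L -> L)
         (tau : forall X Y : L, @KHom L S X Y -> Hom L (tens (Fob X) (lam X)) (lam Y))
         (* (t.2) *)
         (e : forall A : L, lam (Uob A) = A)
         (phinv : forall X Y : L,
             @LSHom L S (bp X Y) (bp (lam X) (lam Y)) (bp X Y) (lam (bp X Y))),
    (* T is a functor L_! -> LS(L_!) with ls o T = id (built in) *)
    T_functor lam tau /\
    (* (t.1): phi_{X,Y} is an isomorphism with inverse phinv X Y *)
    (forall X Y : L, LScomp (phiT lam tau X Y) (phinv X Y) = LSid _ _ /\
                     LScomp (phinv X Y) (phiT lam tau X Y) = LSid _ _) /\
    (* (t.3) *)
    (forall (X A Y B : L) (f : KHom X Y) (u : Hom L (tens (Fob X) A) B),
        LScomp (Wmor f u) (i2 lam e phinv Y B)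
        = LScomp (i2 lam e phinv X A) (Tmor lam tau (curlyW f u))).

End GDSC.

(* Take T(X) = (X, X) and T(f) = (f, ∂_X ; f).  T preserves identities because
   ∂ ; d = w ⊗ 1, and composition by the chain rule (the axiom for ∂ ; p together
   with naturality of ∂).  Since T(π_i) = (π_i, w ⊗ π_i), the comparison φ is the
   identity of LS(L_!), so (t.1) holds with φ⁻¹ = id and i₂ is the linear map
   (id, w ⊗ ι₂).  Axiom (t.3) then says that differentiating ⦃(f,u)⦄ along its
   linear argument U(A) gives back u: the component π₁ ; f has zero derivative in
   that direction, and for the other one, writing m⁻¹ through the contraction and
   applying the Leibniz rule for ∂ ; c leaves only the term where ∂ hits the
   linear argument, which ∂ ; d turns into !π₁ ⊗ 1. *)

Set Implicit Arguments.

(* Rewrites with an equation between composites wherever its left-hand side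
   occurs as a segment of a composite chain, not only as a subterm: both sides are
   right-associated and the equation is extended by an arbitrary continuation.
   The aliases Fob and Uob are unfolded first, since they block matching of the
   implicit object arguments. *)
Tactic Notation "rw" uconstr(E) :=
  let H := fresh in
  epose proof E as H;
  unfold Fob, Uob in H |- *;
  repeat rewrite comp_assoc in H; repeat rewrite comp_assoc;
  first [ rewrite H
        | let H' := fresh in
          epose proof (f_equal (fun h => h ;; _) H) as H'; cbv beta in H';
          repeat rewrite comp_assoc in H'; rewrite H'; clear H' ];
  clear H; repeat rewrite comp_assoc.
Tactic Notation "rw" "<-" uconstr(E) := rw (eq_sym E).

Section Monoidal.
Context {L : AddSMCat}.

Lemma add_0_r {A B : L} (f : Hom L A B) : add f (zero A B) = f.
Proof. rewrite add_comm. apply add_0_l. Qed.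

Lemma tmor_idl_comp {A B C D : L} (f : Hom L B C) (g : Hom L C D) :
  tmor (idm A) (f ;; g) = tmor (idm A) f ;; tmor (idm A) g.
Proof. rewrite <- tmor_comp, comp_id_l. reflexivity. Qed.

Lemma tmor_idr_comp {A B C D : L} (f : Hom L B C) (g : Hom L C D) :
  tmor (f ;; g) (idm A) = tmor f (idm A) ;; tmor g (idm A).
Proof. rewrite <- tmor_comp, comp_id_l. reflexivity. Qed.

Lemma tmor_split_l {A A' B B' : L} (f : Hom L A A') (g : Hom L B B') :
  tmor f g = tmor f (idm B) ;; tmor (idm A') g.
Proof. rewrite <- tmor_comp, comp_id_l, comp_id_r. reflexivity. Qed.

Lemma tmor_split_r {A A' B B' : L} (f : Hom L A A') (g : Hom L B B') :
  tmor f g = tmor (idm A) g ;; tmor f (idm B').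
Proof. rewrite <- tmor_comp, comp_id_l, comp_id_r. reflexivity. Qed.

Lemma assoc_inv_nat {A A' B B' C C' : L} (f : Hom L A A') (g : Hom L B B') (h : Hom L C C') :
  tmor f (tmor g h) ;; assoc_inv A' B' C' = assoc_inv A B C ;; tmor (tmor f g) h.
Proof.
  transitivity (assoc_inv A B C ;; assoc A B C ;; tmor f (tmor g h) ;; assoc_inv A' B' C').
  { rewrite assoc_iso2, comp_id_l. reflexivity. }
  rw <- (assoc_nat f g h). rewrite assoc_iso1, comp_id_r. reflexivity.
Qed.

Lemma assoc_tmor_idl {A B C C' D : L} (c : Hom L D (tens A B)) (h : Hom L C C') :
  tmor (idm D) h ;; tmor c (idm C') ;; assoc A B C'
  = tmor c (idm C) ;; assoc A B C ;; tmor (idm A) (tmor (idm B) h).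
Proof.
  rewrite <- tmor_comp, comp_id_l, comp_id_r, (tmor_split_l c h), <- tmor_id.
  rewrite !comp_assoc, assoc_nat. reflexivity.
Qed.

Lemma tmor_unit_inj {A B : L} (f g : Hom L A B) :
  tmor (idm unit) f = tmor (idm unit) g -> f = g.
Proof.
  intros H.
  assert (E : forall h : Hom L A B, h = lunit_inv A ;; tmor (idm unit) h ;; lunit B).
  { intros h. rewrite comp_assoc, lunit_nat, <- comp_assoc, lunit_iso2, comp_id_l.
    reflexivity. }
  rewrite (E f), (E g), H. reflexivity.
Qed.

(* Kelly's lemma: it follows from the pentagon and the triangle after
   tensoring with the unit on the left. *)
Lemma assoc_lunit (B C : L) :
  assoc unit B C ;; lunit (tens B C) = tmor (lunit B) (idm C).
Proof.
  apply tmor_unit_inj.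
  set (a := tmor (assoc unit unit B) (idm C) ;; assoc unit (tens unit B) C).
  set (a_inv := assoc_inv unit (tens unit B) C ;; tmor (assoc_inv unit unit B) (idm C)).
  assert (Ha : a_inv ;; a = idm _).
  { unfold a, a_inv.
    rw <- (tmor_idr_comp (A := C) (assoc_inv unit unit B) (assoc unit unit B)).
    rewrite assoc_iso2, tmor_id, comp_id_l. apply assoc_iso2. }
  rewrite <- (comp_id_l (tmor (idm unit) (assoc unit B C ;; lunit (tens B C)))), <- Ha.
  rewrite <- (comp_id_l (tmor (idm unit) (tmor (lunit B) (idm C)))), <- Ha.
  rewrite !comp_assoc. f_equal.
  unfold a. rewrite tmor_idl_comp. rw (pentagon _ _ _ _). rw (triangle _ _).
  rw <- (assoc_nat (idm unit) (lunit B) (idm C)).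
  rewrite <- (comp_assoc (tmor (assoc unit unit B) (idm C))), <- tmor_idr_comp, triangle.
  rewrite assoc_nat, tmor_id. reflexivity.
Qed.

End Monoidal.

Section CoKleisli.
Context {L : AddSMCat} {S : Storage L}.

Lemma Fmor_kid (X : L) : Fmor (kid X) = idm (Fob X).
Proof. apply comonad_2. Qed.

Lemma Fmor_lin {X Y : L} (h : Hom L X Y) : Fmor (der X ;; h : KHom X Y) = bmor h.
Proof. unfold Fmor. rewrite bmor_comp. rw (comonad_2 S _). apply comp_id_l. Qed.

Lemma Fmor_eta (X : L) : Fmor (eta X) = dig X.
Proof. unfold Fmor, eta. rewrite bmor_id. apply comp_id_r. Qed.

Lemma Fmor_kcomp {X Y Z : L} (f : KHom X Y) (g : KHom Y Z) :
  Fmor (kcomp f g) = Fmor f ;; Fmor g.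
Proof.
  unfold Fmor, kcomp. rewrite !bmor_comp.
  rw <- (comonad_3 S X). rw <- (dig_nat S f). reflexivity.
Qed.

Lemma kcomp_kid_l {X Y : L} (f : KHom X Y) : kcomp (kid X) f = f.
Proof. unfold kcomp. rewrite comonad_2. apply comp_id_l. Qed.

Lemma kcomp_kid_r {X Y : L} (f : KHom X Y) : kcomp f (kid Y) = f.
Proof. unfold kcomp, kid. rw (der_nat S f). rw (comonad_1 S X). apply comp_id_l. Qed.

Lemma kcomp_assoc {X Y Z W : L} (f : KHom X Y) (g : KHom Y Z) (h : KHom Z W) :
  kcomp (kcomp f g) h = kcomp f (kcomp g h).
Proof.
  change (Fmor (kcomp f g) ;; h = Fmor f ;; (Fmor g ;; h)).
  rewrite Fmor_kcomp. apply comp_assoc.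
Qed.

Lemma kcomp_kpair {X Y Z W : L} (h : KHom X Y) (a : KHom Y Z) (b : KHom Y W) :
  kcomp h (kpair a b) = kpair (kcomp h a) (kcomp h b).
Proof. unfold kcomp, kpair, bpair. rewrite comp_add_r, !comp_assoc. reflexivity. Qed.

Lemma kcomp_kpi1 {X Y Z : L} (a : KHom X Y) (b : KHom X Z) :
  kcomp (kpair a b) (kpi1 Y Z) = a.
Proof.
  unfold kcomp, kpi1. rw (der_nat S (kpair a b)). rw (comonad_1 S X). rewrite comp_id_l.
  unfold kpair, bpair. rewrite comp_add_l, !comp_assoc, inj1_pi1, inj2_pi1, comp_id_r, comp_0_r.
  apply add_0_r.
Qed.

Lemma kcomp_kpi2 {X Y Z : L} (a : KHom X Y) (b : KHom X Z) :
  kcomp (kpair a b) (kpi2 Y Z) = b.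
Proof.
  unfold kcomp, kpi2. rw (der_nat S (kpair a b)). rw (comonad_1 S X). rewrite comp_id_l.
  unfold kpair, bpair. rewrite comp_add_l, !comp_assoc, inj1_pi2, inj2_pi2, comp_id_r, comp_0_r.
  apply add_0_l.
Qed.

Lemma kpair_kpi (X Y : L) : kpair (kpi1 X Y) (kpi2 X Y) = kid (bp X Y).
Proof.
  unfold kpair, bpair, kpi1, kpi2, kid.
  rewrite !comp_assoc, <- comp_add_r, bp_id. apply comp_id_r.
Qed.

Lemma kdiag_kprod (X Y Z : L) (f : KHom X Y) (g : KHom X Z) :
  kcomp (kdiag X) (kprod f g) = kpair f g.
Proof.
  unfold kprod. rewrite kcomp_kpair, <- !kcomp_assoc. unfold kdiag.
  rewrite kcomp_kpi1, kcomp_kpi2, !kcomp_kid_l. reflexivity.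
Qed.

Lemma weak_nat {X Y : L} (f : KHom X Y) : Fmor f ;; weak Y = weak X.
Proof.
  unfold weak. rw <- (Fmor_kcomp f (kterm Y)).
  unfold kcomp, kterm. rewrite comp_0_r. reflexivity.
Qed.

End CoKleisli.

Section Seely.
Context {L : AddSMCat} {S : Storage L} (SL : SeelyLaws S).

Lemma mF_inv_nat {X X' Y Y' : L} (f : KHom X X') (g : KHom Y Y') :
  Fmor (kprod f g) ;; mF_inv X' Y' = mF_inv X Y ;; tmor (Fmor f) (Fmor g).
Proof.
  transitivity (mF_inv X Y ;; mF X Y ;; Fmor (kprod f g) ;; mF_inv X' Y').
  { unfold mF, mF_inv. rewrite seely_iso2, comp_id_l. reflexivity. }
  rw <- (seely_nat SL f g). unfold mF, mF_inv. rw (seely_iso1 S X' Y').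
  rewrite comp_id_r. reflexivity.
Qed.

Lemma contr_weak_l (X : L) : contr X ;; tmor (weak X) (idm (Fob X)) ;; lunit (Fob X) = idm _.
Proof.
  assert (E : tmor (weak X) (idm (Fob X))
              = tmor (Fmor (kterm X)) (Fmor (kid X)) ;; tmor mF1_inv (idm _)).
  { unfold weak. rewrite <- tmor_comp, Fmor_kid, comp_id_l. reflexivity. }
  rewrite E, <- (seely_lunit SL X).
  rw <- (tmor_idr_comp (A := Fob X) mF1_inv mF1).
  unfold mF1_inv, mF1. rewrite seely0_iso2, tmor_id, comp_id_l.
  unfold contr. rw <- (mF_inv_nat (kterm X) (kid X)). unfold mF_inv, mF.
  rw (seely_iso2 S zob X). rewrite comp_id_l, <- !Fmor_kcomp, <- kcomp_assoc, kdiag_kprod.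
  rewrite kcomp_kpi2. apply Fmor_kid.
Qed.

Lemma contr_weak_r (X : L) : contr X ;; tmor (idm (Fob X)) (weak X) ;; runit (Fob X) = idm _.
Proof.
  assert (E : tmor (idm (Fob X)) (weak X)
              = tmor (Fmor (kid X)) (Fmor (kterm X)) ;; tmor (idm _) mF1_inv).
  { unfold weak. rewrite <- tmor_comp, Fmor_kid, comp_id_l. reflexivity. }
  rewrite E, <- (seely_runit SL X).
  rw <- (tmor_idl_comp (A := Fob X) mF1_inv mF1).
  unfold mF1_inv, mF1. rewrite seely0_iso2, tmor_id, comp_id_l.
  unfold contr. rw <- (mF_inv_nat (kid X) (kterm X)). unfold mF_inv, mF.
  rw (seely_iso2 S X zob). rewrite comp_id_l, <- !Fmor_kcomp, <- kcomp_assoc, kdiag_kprod.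
  rewrite kcomp_kpi1. apply Fmor_kid.
Qed.

Lemma mF_inv_contr (X Y : L) :
  mF_inv X Y = contr (bp X Y) ;; tmor (bmor (pi1 X Y)) (bmor (pi2 X Y)).
Proof.
  unfold contr.
  rewrite <- (Fmor_lin (pi1 X Y) : Fmor (kpi1 X Y) = _).
  rewrite <- (Fmor_lin (pi2 X Y) : Fmor (kpi2 X Y) = _).
  rw <- (mF_inv_nat (kpi1 X Y) (kpi2 X Y)).
  rw <- (Fmor_kcomp _ _). rewrite kdiag_kprod, kpair_kpi, Fmor_kid, comp_id_l. reflexivity.
Qed.

Lemma contr_weak_tens_l (X A : L) :
  tmor (contr X) (idm A) ;; assoc _ _ _ ;; tmor (weak X) (idm (tens (Fob X) A)) ;; lunit _
  = idm _.
Proof.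
  rewrite <- (tmor_id (Fob X) A).
  rw <- (assoc_nat (weak X) (idm (Fob X)) (idm A)). rewrite assoc_lunit.
  rewrite <- !tmor_comp, !comp_id_l. rw (contr_weak_l X). reflexivity.
Qed.

Lemma contr_weak_tens_r (X A : L) :
  tmor (contr X) (idm A) ;; assoc _ _ _ ;; tmor (idm _) (tmor (weak X) (idm A))
  ;; tmor (idm _) (lunit A) = idm _.
Proof.
  rw <- (assoc_nat (idm (Fob X)) (weak X) (idm A)). rw (triangle _ _).
  rewrite <- !tmor_comp, !comp_id_l. rw (contr_weak_r X). apply tmor_id.
Qed.

Definition LSlin {A C : L} (X : L) (h : Hom L A C) : LSHom X A X C :=
  (kid X, tmor (weak X) h ;; lunit C).

Lemma LScomp_LSlin_r {X A Y B C : L} (g : KHom X Y) (v : Hom L (tens (Fob X) A) B)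
  (h : Hom L B C) : LScomp (g, v) (LSlin Y h) = (g, v ;; h).
Proof.
  unfold LScomp, LSlin; simpl. rewrite kcomp_kid_r. f_equal.
  rw <- (tmor_comp (Fmor g) (weak Y) v h). rewrite weak_nat.
  rewrite (tmor_split_l (weak X) (v ;; h)). rw (lunit_nat (v ;; h)).
  rw (contr_weak_tens_l X A). apply comp_id_l.
Qed.

Lemma LScomp_LSlin_l {Z A C Y B : L} (h : Hom L A C) (g : KHom Z Y)
  (v : Hom L (tens (Fob Z) C) B) : LScomp (LSlin Z h) (g, v) = (g, tmor (idm _) h ;; v).
Proof.
  unfold LScomp, LSlin; simpl. rewrite kcomp_kid_l. f_equal.
  rewrite Fmor_kid, tmor_idl_comp, (tmor_split_r (weak Z) h), tmor_idl_comp.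
  rw <- (assoc_tmor_idl (contr Z) h).
  rw (contr_weak_tens_r Z C). rewrite comp_id_l. reflexivity.
Qed.

Lemma nU_eq (A B : L) : nU A B = mF_inv A B ;; tmor (der A) (der B).
Proof.
  unfold nU, kcomp, eta, Umor, Uob. rewrite bmor_id, comp_id_r.
  rw (comonad_1 S _). apply comp_id_l.
Qed.

Lemma eta_nU_Umor {X A B : L} (u : Hom L (tens (Fob X) A) B) :
  kcomp (kcomp (kprod (eta X) (kid (Uob A))) (nU (Fob X) A)) (Umor u)
  = mF_inv X A ;; tmor (idm (Fob X)) (der A) ;; u.
Proof.
  unfold kcomp at 1, Umor. rw (der_nat S _). rw (comonad_1 S _). rewrite comp_id_l.
  unfold kcomp. rewrite nU_eq.
  change (dig (bp X A) ;; bmor (kprod (eta X) (kid A)))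
    with (Fmor (kprod (eta X) (kid (Uob A)))).
  rw (mF_inv_nat (eta X) (kid (Uob A))). rw (Fmor_eta X). rw (Fmor_kid A).
  rw <- (tmor_comp (dig X) (der (bang X)) (idm (bang A)) (der A)).
  rewrite comonad_1, comp_id_l. reflexivity.
Qed.

End Seely.

Section Derivative.
Context {L : AddSMCat} {S : Storage L} (SL : SeelyLaws S) (DL : Deriving S).

Lemma del_kcomp {X Y Z : L} (f : KHom X Y) (g : KHom Y Z) :
  del DL X ;; kcomp f g
  = tmor (contr X) (idm X) ;; assoc _ _ _ ;; tmor (Fmor f) (del DL X ;; f) ;; (del DL Y ;; g).
Proof.
  unfold kcomp. rw (del_dig DL X). rw <- (del_nat DL f).
  rw <- (tmor_comp (dig X) (bmor f) (del DL X) f). reflexivity.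
Qed.

Lemma del_bmor_eq0 {C A B : L} (k : Hom L C A) (h : Hom L A B) :
  k ;; h = zero C B -> tmor (idm (bang A)) k ;; del DL A ;; bmor h = zero _ _.
Proof.
  intros Hkh. rw <- (del_nat DL h). rw <- (tmor_comp (idm (bang A)) (bmor h) k h).
  rewrite Hkh, tmor_0_r, comp_0_l. reflexivity.
Qed.

Lemma del_inj2_leibniz_fst (X A : L) :
  tmor (idm (bang (bp X A))) (inj2 X A) ;; tmor (contr (bp X A)) (idm (bp X A)) ;; assoc _ _ _
  ;; tmor (idm _) (sym _ _) ;; assoc_inv _ _ _ ;; tmor (del DL (bp X A)) (idm _)
  ;; tmor (bmor (pi1 X A)) (bmor (pi2 X A)) ;; tmor (idm (bang X)) (der A)
  = zero _ _.
Proof.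
  rw (assoc_tmor_idl (contr (bp X A)) (inj2 X A)).
  rw <- (tmor_idl_comp (tmor (idm (bang (bp X A))) (inj2 X A)) (sym _ _)).
  rw (sym_nat (idm (bang (bp X A))) (inj2 X A)).
  rw (tmor_idl_comp (A := bang (bp X A)) (sym (bang (bp X A)) A) (tmor (inj2 X A) (idm _))).
  rw (assoc_inv_nat (idm (bang (bp X A))) (inj2 X A) (idm (bang (bp X A)))).
  rw <- (tmor_comp (tmor (idm _) (inj2 X A)) (del DL (bp X A)) (idm (bang (bp X A))) (idm _)).
  rewrite comp_id_l.
  rw <- (tmor_comp (tmor (idm _) (inj2 X A) ;; del DL (bp X A)) (bmor (pi1 X A))
           (idm _) (bmor (pi2 X A))).
  rw (del_bmor_eq0 (inj2 X A) (pi1 X A) (inj2_pi1 X A)).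
  rewrite tmor_0_l, comp_0_l, !comp_0_r. reflexivity.
Qed.

Lemma del_inj2_pi2_der (X A : L) :
  tmor (idm (bang (bp X A))) (inj2 X A) ;; del DL (bp X A) ;; bmor (pi2 X A) ;; der A
  = tmor (weak (bp X A)) (idm A) ;; lunit A.
Proof.
  rw (der_nat S (pi2 X A)). rw (del_der DL (bp X A)).
  rw <- (tmor_comp (idm (bang (bp X A))) (weak (bp X A)) (inj2 X A) (idm _)).
  rewrite comp_id_l, comp_id_r, (tmor_split_l (weak (bp X A)) (inj2 X A)).
  rw (lunit_nat (inj2 X A)). rewrite inj2_pi2, comp_id_r. reflexivity.
Qed.

Lemma del_inj2_leibniz_snd (X A : L) :
  tmor (idm (bang (bp X A))) (inj2 X A) ;; tmor (contr (bp X A)) (idm (bp X A)) ;; assoc _ _ _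
  ;; tmor (idm _) (del DL (bp X A)) ;; tmor (bmor (pi1 X A)) (bmor (pi2 X A))
  ;; tmor (idm (bang X)) (der A)
  = tmor (bmor (pi1 X A)) (idm A).
Proof.
  rw (assoc_tmor_idl (contr (bp X A)) (inj2 X A)).
  rewrite <- !tmor_comp, !comp_id_l, comp_id_r. rw (del_inj2_pi2_der X A).
  rewrite (tmor_split_r (bmor (pi1 X A)) (tmor (weak (bp X A)) (idm A) ;; lunit A)).
  rewrite tmor_idl_comp. rw (contr_weak_tens_r SL (bp X A) A). apply comp_id_l.
Qed.

Lemma del_inj2_mF_inv (X A : L) :
  tmor (idm (bang (bp X A))) (inj2 X A) ;; del DL (bp X A) ;; mF_inv X A
  ;; tmor (idm (bang X)) (der A)
  = tmor (bmor (pi1 X A)) (idm A).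
Proof.
  rewrite (mF_inv_contr SL X A). rw (del_contr DL (bp X A)).
  rewrite comp_add_l, !comp_add_r.
  rw (del_inj2_leibniz_snd X A). rw (del_inj2_leibniz_fst X A). apply add_0_r.
Qed.

End Derivative.

Section Tangent.
Context {L : AddSMCat} {S : Storage L} (SL : SeelyLaws S) (DL : Deriving S).

Definition tangent (X Y : L) (f : KHom X Y) : Hom L (tens (Fob X) X) Y := del DL X ;; f.

Lemma tangent_functor : T_functor (fun X : L => X) tangent.
Proof.
  split.
  - intros X. unfold Tmor, LSid, tangent. f_equal. apply del_der.
  - intros X Y Z f g. unfold Tmor, LScomp, tangent; simpl. f_equal. apply del_kcomp.
Qed.

Lemma LScomp_LSid (X A : L) : LScomp (LSid X A) (LSid X A) = LSid X A.
Proof.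
  unfold LSid at 1. change (LSid X A) with (LSlin X (idm A)).
  rewrite LScomp_LSlin_r, comp_id_r by exact SL. reflexivity.
Qed.

Lemma phiT_tangent (X Y : L) : phiT (fun Z : L => Z) tangent X Y = LSid (bp X Y) (bp X Y).
Proof.
  unfold phiT, LSpair, Tmor, LSid, tangent; simpl. f_equal.
  - apply kpair_kpi.
  - unfold bpair. rewrite !comp_assoc, <- comp_add_r.
    change (add (kpi1 X Y ;; inj1 X Y) (kpi2 X Y ;; inj2 X Y)) with (kpair (kpi1 X Y) (kpi2 X Y)).
    rewrite kpair_kpi. apply del_der.
Qed.

Lemma i2_tangent (X A : L) :
  i2 (fun Z : L => Z) (fun A : L => eq_refl) (fun Z Y : L => LSid (bp Z Y) (bp Z Y)) X A
  = LSlin (bp X A) (inj2 X A).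
Proof.
  unfold i2, Uob; cbn [castSrc].
  change (LSid (bp X A) (bp X A)) with (LSlin (bp X A) (idm (bp X A))).
  rewrite LScomp_LSlin_r, comp_id_r by exact SL. reflexivity.
Qed.

Lemma Wmor_inj2_tangent {X A Y B : L} (f : KHom X Y) (u : Hom L (tens (Fob X) A) B) :
  LScomp (Wmor f u) (LSlin (bp Y (Uob B)) (inj2 Y B))
  = LScomp (LSlin (bp X (Uob A)) (inj2 X A)) (Tmor (fun Z : L => Z) tangent (curlyW f u)).
Proof.
  unfold Wmor, Tmor. rewrite LScomp_LSlin_r, LScomp_LSlin_l by exact SL. f_equal.
  unfold tangent, curlyW, kpair, bpair, Uob. rewrite !comp_add_r.
  assert (Hfst : tmor (idm (Fob (bp X A))) (inj2 X A)
                   ;; (del DL (bp X A) ;; (kcomp (kpi1 X A) f ;; inj1 Y B))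
                 = zero _ _).
  { change (kcomp (kpi1 X A) f) with (Fmor (kpi1 X A) ;; f).
    rewrite (Fmor_lin (pi1 X A) : Fmor (kpi1 X A) = _).
    rw (del_bmor_eq0 DL (inj2 X A) (pi1 X A) (inj2_pi1 X A)). rewrite !comp_0_l. reflexivity. }
  assert (Hsnd : tmor (idm (Fob (bp X A))) (inj2 X A) ;; (del DL (bp X A)
                   ;; (kcomp (kcomp (kprod (eta X) (kid A)) (nU (Fob X) A)) (Umor u) ;; inj2 Y B))
                 = tmor (Fmor (kpi1 X A)) (idm A) ;; u ;; inj2 Y B).
  { rw (eta_nU_Umor SL u). rw (del_inj2_mF_inv SL DL X A).
    rewrite (Fmor_lin (pi1 X A) : Fmor (kpi1 X A) = _). reflexivity. }
  rw Hfst. rw Hsnd. rewrite add_0_l. reflexivity.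
Qed.

End Tangent.

Theorem theorem4p7 (D : DiffSeely) : @is_GDSC_T (dsL D) (dsS D).
Proof.
  destruct D as [L S SL DL]; simpl.
  exists (fun X : L => X), (tangent DL), (fun A : L => eq_refl),
    (fun X Y : L => LSid (bp X Y) (bp X Y)).
  split; [apply tangent_functor | split].
  - intros X Y. rewrite phiT_tangent, (LScomp_LSid SL). split; reflexivity.
  - intros X A Y B f u. rewrite !(i2_tangent SL). apply (Wmor_inj2_tangent SL).
Qed.
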